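(* Let $t\ge 1$ and let $\mathcal H$ be any 3-graph. Let $E_1$ be the set of pairs of vertices contained in at least one and at most $t$ hyperedges of $\mathcal H$, $E_2$ the set of pairs contained in at least $t+1$ and at most $2t$ hyperedges, and $E_3$ the set of pairs contained in at least $2t+1$ and at most $3t$ hyperedges. For $i=1,2,3$ let $\mathcal H_i$ be the set of hyperedges of $\mathcal H$ containing at least $i$ pairs from $E_i$, and let $\mathcal H_4$ be the set of hyperedges containing exactly one pair from $E_2$ and two pairs from $E_3$. Then $$|\mathcal H_1|+|\mathcal H_2|+|\mathcal H_3|+|\mathcal H_4|\le t\,(|E_1|+|E_2|+|E_3|).$$
   Context: A pair (2-subset) $e$ of vertices is said to be contained in a hyperedge $h$ if $e\subset h$. *)

From mathcomp Require Import all_boot.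
Set Implicit Arguments. Unset Strict Implicit. Unset Printing Implicit Defensive.

Definition is_3graph (T : finType) (H : {set {set T}}) : Prop :=
  forall h, h \in H -> #|h| = 3.

Definition codeg (T : finType) (H : {set {set T}}) (e : {set T}) : nat :=
  #|[set h in H | e \subset h]|.

Definition Eband (T : finType) (H : {set {set T}}) (lo hi : nat) : {set {set T}} :=
  [set e : {set T} | (#|e| == 2) && (lo <= codeg H e <= hi)].

Definition E1 (T : finType) (H : {set {set T}}) (t : nat) := Eband H 1 t.
Definition E2 (T : finType) (H : {set {set T}}) (t : nat) := Eband H t.+1 (2 * t).
Definition E3 (T : finType) (H : {set {set T}}) (t : nat) := Eband H (2 * t).+1 (3 * t).

Definition npairs (T : finType) (E : {set {set T}}) (h : {set T}) : nat :=
  #|[set e in E | e \subset h]|.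

Definition Hi (T : finType) (H : {set {set T}}) (E : {set {set T}}) (i : nat) :=
  [set h in H | i <= npairs E h].

Definition H4 (T : finType) (H : {set {set T}}) (t : nat) :=
  [set h in H | (npairs (E2 H t) h == 1) && (npairs (E3 H t) h == 2)].

(* Discharging: a pair of E_i has codegree at most i t, so giving weight 6/i to
   each pair of E_i that lies in a hyperedge, every pair distributes at most 6t
   in total.  Conversely a hyperedge contains at most three pairs, and a case
   check shows that whenever it belongs to k of the families H_1, ..., H_4 it
   receives weight at least 6k. *)

From mathcomp Require Import all_boot.
From mathcomp Require Import zify.

Set Implicit Arguments.
Unset Strict Implicit.
Unset Printing Implicit Defensive.

Lemma card_setId_sum (U : finType) (A : {set U}) (P : pred U) :
  #|[set x in A | P x]| = \sum_(x in A) P x.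
Proof.
rewrite -sum1_card big_mkcond [RHS]big_mkcond /=; apply: eq_bigr => x _.
by rewrite inE; case: (x \in A); case: (P x).
Qed.

Section Pairs.

Variable T : finType.
Implicit Types (H E : {set {set T}}) (h : {set T}).

Definition pairs_of h := [set e : {set T} | (e \subset h) && (#|e| == 2)].

Lemma card_pairs_of3 h : #|h| = 3 -> #|pairs_of h| <= 3.
Proof.
move=> h3; rewrite -[X in _ <= X]h3.
apply: leq_trans (leq_imset_card (fun x => h :\ x) h).
apply: subset_leq_card; apply/subsetP => e; rewrite inE => /andP [eh e2].
have /cards1P [x hx] : #|h :\: e| == 1 by rewrite cardsDS // h3 (eqP e2).
have xh : x \in h by have := set11 x; rewrite -hx => /setDP [].
apply/imsetP; exists x => //.
by rewrite -hx setDDr setDv set0U; apply/esym/setIidPr.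
Qed.

Lemma sum_codeg_npairs H E :
  \sum_(e in E) codeg H e = \sum_(h in H) npairs E h.
Proof.
rewrite /codeg /npairs.
under eq_bigr do rewrite card_setId_sum.
under [RHS]eq_bigr do rewrite card_setId_sum.
exact: exchange_big.
Qed.

Lemma npairs_setU E1 E2 h : [disjoint E1 & E2] ->
  npairs (E1 :|: E2) h = npairs E1 h + npairs E2 h.
Proof.
move=> dis; rewrite /npairs !setIdE setIUl -cardsUI.
by rewrite setIACA (disjoint_setI0 dis) set0I cards0 addn0.
Qed.

Lemma npairs_le_pairs_of E h :
  (forall e, e \in E -> #|e| = 2) -> npairs E h <= #|pairs_of h|.
Proof.
move=> E2; apply: subset_leq_card; apply/subsetP => e.
by rewrite !inE => /andP [eE ->]; rewrite E2.
Qed.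

Lemma Eband_card2 H lo hi e : e \in Eband H lo hi -> #|e| = 2.
Proof. by rewrite inE => /andP [/eqP]. Qed.

Lemma Eband_disjoint H lo1 hi1 lo2 hi2 :
  hi1 < lo2 -> [disjoint Eband H lo1 hi1 & Eband H lo2 hi2].
Proof.
move=> gap; apply/pred0P => e /=; rewrite !inE.
apply/negP => /andP [/and3P [_ _ le1] /and3P [_ le2 _]].
by have := leq_ltn_trans le1 (leq_trans gap le2); rewrite ltnn.
Qed.

Lemma sum_codeg_Eband_le H lo hi :
  \sum_(e in Eband H lo hi) codeg H e <= #|Eband H lo hi| * hi.
Proof.
rewrite -sum_nat_const; apply: leq_sum => e.
by rewrite inE => /and3P [].
Qed.

Lemma npairs_E123_le3 H t h : #|h| = 3 ->
  npairs (E1 H t) h + npairs (E2 H t) h + npairs (E3 H t) h <= 3.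
Proof.
move=> h3; rewrite /E1 /E2 /E3.
have d12 := @Eband_disjoint H 1 t t.+1 (2 * t) (ltnSn t).
have d23 := @Eband_disjoint H t.+1 (2 * t) (2 * t).+1 (3 * t) (ltnSn _).
have d13 := @Eband_disjoint H 1 t (2 * t).+1 (3 * t) (leq_pmull t (isT : 0 < 2)).
have d12_3 : [disjoint Eband H 1 t :|: Eband H t.+1 (2 * t)
                    & Eband H (2 * t).+1 (3 * t)].
  by rewrite -setI_eq0 setIUl (disjoint_setI0 d13) (disjoint_setI0 d23) setU0.
rewrite -npairs_setU // -npairs_setU //.
apply: leq_trans _ (card_pairs_of3 h3); apply: npairs_le_pairs_of => e.
by rewrite !in_setU -!orbA => /or3P [] /Eband_card2.
Qed.

End Pairs.

Lemma hyperedge_weight (a1 a2 a3 : nat) : a1 + a2 + a3 <= 3 ->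
  6 * ((1 <= a1) + (2 <= a2) + (3 <= a3) + ((a2 == 1) && (a3 == 2)))
  <= 6 * a1 + 3 * a2 + 2 * a3.
Proof.
case: a1 => [|[|[|[|a1]]]]; case: a2 => [|[|[|[|a2]]]];
  case: a3 => [|[|[|[|a3]]]] //=; lia.
Qed.

Theorem claim1 (T : finType) (H : {set {set T}}) (t : nat) :
  1 <= t -> is_3graph H ->
  #|Hi H (E1 H t) 1| + #|Hi H (E2 H t) 2| + #|Hi H (E3 H t) 3| + #|H4 H t|
  <= t * (#|E1 H t| + #|E2 H t| + #|E3 H t|).
Proof.
move=> _ H3.
rewrite /Hi /H4 !card_setId_sum -!big_split /=.
rewrite -(leq_pmul2l (isT : 0 < 6)) big_distrr /=.
apply: (@leq_trans (\sum_(h in H) (6 * npairs (E1 H t) h + 3 * npairs (E2 H t) h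
                                     + 2 * npairs (E3 H t) h))).
  apply: leq_sum => h hH; apply: hyperedge_weight.
  exact: npairs_E123_le3 (H3 h hH).
rewrite 2!big_split -!big_distrr /= -!sum_codeg_npairs /E1 /E2 /E3.
apply: leq_trans (leq_add (leq_add
    (leq_mul (leqnn 6) (sum_codeg_Eband_le H 1 t))
    (leq_mul (leqnn 3) (sum_codeg_Eband_le H t.+1 (2 * t))))
    (leq_mul (leqnn 2) (sum_codeg_Eband_le H (2 * t).+1 (3 * t)))) _.
move: #|Eband H 1 t| #|Eband H t.+1 (2 * t)| #|Eband H (2 * t).+1 (3 * t)|.
move=> c1 c2 c3; nia.
Qed.
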